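(* For every $T\ge T_0[\varphi_1]$ and $U\in(0,T/\ln T]$, with $\mathcal{J}(T,U)=[T,T+U]$ and $\mathring{\mathcal{J}}(T,U)=[\varphi_1^{-1}(T),\varphi_1^{-1}(T+U)]$, there exists $\xi\in(\varphi_1^{-1}(T),\varphi_1^{-1}(T+U))$ with $\tilde Z(\xi)\ne0$ and $$\tilde Z^2(\xi)=\frac{|\mathcal{J}(T,U)|}{|\mathring{\mathcal{J}}(T,U)|}.$$
   Context: Let $Z(t)=e^{i\vartheta(t)}\zeta(\tfrac12+it)$ with $\vartheta(t)=-\frac t2\ln\pi+\operatorname{Im}\ln\Gamma(\frac14+\frac{it}{2})$. Let $\mu(y)$ be continuous with $\mu(y)\ge 7y\ln y$ and $\Phi(\varphi)=\int_0^{\mu[\varphi]}Z^2(t)e^{-2t/\varphi}\,dt$. A Jacob's ladder is a continuous solution $\varphi(T)$, $T\ge T_0$, of $\Phi(\varphi(T))=\int_0^T Z^2(t)\,dt$ (from the author's earlier work). Put $\varphi_1=\frac12\varphi$ (defined for $T\ge T_0[\varphi_1]$) and $\tilde Z^2(t)=\frac{Z^2(t)}{2\Phi'(\varphi(t))}$, so $\varphi_1'=\tilde Z^2$. $\varphi_1$ is increasing and $\varphi_1^{-1}(x)$ denotes the unique $t$ with $\varphi_1(t)=x$; $|I|$ denotes the length of a segment $I$. *)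

From Stdlib Require Import Reals.
From Coquelicot Require Import Coquelicot.
Open Scope R_scope.

Definition euler_gamma : R :=
  real (Lim_seq (fun n => sum_n (fun k => / INR (k + 1)) n - ln (INR (n + 1)))).

(* Im ln Gamma(x + i y), x > 0, for the analytic (principal) branch of
   ln Gamma on Re z > 0 given by the Weierstrass product:
   ln Gamma(z) = -gamma z - Log z + sum_{k>=1} (z/k - Log(1 + z/k)). *)
Definition ImLnGamma (x y : R) : R :=
  - euler_gamma * y - atan (y / x)
  + Series (fun k => y / INR (k + 1) - atan (y / (x + INR (k + 1)))).

Definition vartheta (t : R) : R := - (t / 2) * ln PI + ImLnGamma (1 / 4) (t / 2).

(* zeta(1/2 + i t) via the Dirichlet eta function:
   zeta(s) = eta(s) / (1 - 2^{1-s}), eta(s) = sum_{n>=1} (-1)^{n-1} n^{-s},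
   with n^{-s} = n^{-1/2} (cos (t ln n) - i sin (t ln n)). *)
Definition eta_crit_re (t : R) : R :=
  Series (fun n => (-1) ^ n * / sqrt (INR (n + 1)) * cos (t * ln (INR (n + 1)))).
Definition eta_crit_im (t : R) : R :=
  Series (fun n => - ((-1) ^ n * / sqrt (INR (n + 1)) * sin (t * ln (INR (n + 1))))).

Definition zeta_crit (t : R) : C :=
  Cdiv (eta_crit_re t, eta_crit_im t)
       (1 - sqrt 2 * cos (t * ln 2), sqrt 2 * sin (t * ln 2)).

(* Hardy's function: Zc(t) = e^{i vartheta(t)} zeta(1/2 + i t) (complex-valued
   a priori; it is real by the functional equation) and Z(t) its real value. *)
Definition Zc (t : R) : C := Cmult (cos (vartheta t), sin (vartheta t)) (zeta_crit t).
Definition HardyZ (t : R) : R := Re (Zc t).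

Definition PhiJ (mu : R -> R) (y : R) : R :=
  RInt (fun t => (HardyZ t) ^ 2 * exp (- 2 * t / y)) 0 (mu y).

Definition phi1 (phi : R -> R) (t : R) : R := phi t / 2.

Definition Ztilde2 (mu phi : R -> R) (t : R) : R :=
  (HardyZ t) ^ 2 / (2 * Derive (PhiJ mu) (phi t)).

From Stdlib Require Import Reals Lra.
From Coquelicot Require Import Coquelicot.
Open Scope R_scope.

(* Since [phi1' = Ztilde2], Lagrange's mean value theorem for [phi1] on [[a, b]]
   gives an interior [xi] with [U = phi1 b - phi1 a = (b - a) Ztilde2 xi], and
   [U > 0] makes [Ztilde2 xi] nonzero.  At [a] the ladder is only known to be
   continuous from the right, which suffices after replacing [phi1] by
   [x |-> phi1 (max x a)], a function that agrees with it to the right of [a]. *)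

Lemma mean_value_open (f df : R -> R) (a b : R) :
  a < b ->
  (forall x, a < x < b -> is_derive f x (df x)) ->
  (forall x, a <= x <= b -> continuity_pt f x) ->
  exists c, a < c < b /\ f b - f a = df c * (b - a).
Proof.
  intros Hab Hd Hc.
  assert (pr : forall c, a < c < b -> derivable_pt f c).
  { intros c Hc'. exists (df c). apply is_derive_Reals, Hd, Hc'. }
  destruct (MVT f id a b pr (fun c _ => derivable_pt_id c) Hab Hc
              (fun c _ => derivable_continuous_pt _ _ (derivable_pt_id c)))
    as [c [Pc Hmvt]].
  exists c; split; [exact Pc|].
  rewrite derive_pt_id in Hmvt.
  rewrite (derive_pt_eq_0 _ _ _ _ (proj1 (is_derive_Reals _ _ _) (Hd c Pc))) in Hmvt.
  unfold id in Hmvt; lra.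
Qed.

Lemma continuity_pt_Rmax_clamp (f : R -> R) (l a : R) :
  l <= a ->
  filterlim f (within (fun x => l <= x) (locally a)) (locally (f a)) ->
  continuity_pt (fun x => f (Rmax x a)) a.
Proof.
  intros Hla Hf.
  apply continuity_pt_filterlim.
  rewrite Rmax_right by lra.
  apply (filterlim_comp _ _ _ (fun x => Rmax x a) f _
           (within (fun x => l <= x) (locally a))); [|exact Hf].
  intros P [eps HP]; exists eps; intros y Hy.
  apply HP; [|apply Rle_trans with a; [lra | apply Rmax_r]].
  apply (Rle_lt_trans _ (abs (minus y a))); [|exact Hy].
  unfold abs, minus, plus, opp; simpl.
  unfold Rmax; destruct (Rle_dec y a); [|lra].
  rewrite Rplus_opp_r, Rabs_R0; apply Rabs_pos.
Qed.

Lemma mean_value_right_continuous (f df : R -> R) (l a b : R) :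
  l <= a -> a < b ->
  filterlim f (within (fun x => l <= x) (locally a)) (locally (f a)) ->
  (forall x, a < x <= b -> is_derive f x (df x)) ->
  exists c, a < c < b /\ f b - f a = df c * (b - a).
Proof.
  intros Hla Hab Hf Hd.
  set (g := fun x => f (Rmax x a)).
  assert (Hfg : forall c, a < c -> locally c (fun x => f x = g x)).
  { intros c Hc. apply (locally_interval _ c a p_infty); simpl; auto.
    intros y Hy _. unfold g. rewrite Rmax_left; lra. }
  assert (Hdg : forall x, a < x <= b -> is_derive g x (df x)).
  { intros x Hx. apply (is_derive_ext_loc f); [apply Hfg; lra | apply Hd, Hx]. }
  destruct (mean_value_open g df a b Hab) as [c [Hc Hmvt]].
  - intros x Hx; apply Hdg; lra.
  - intros x [[Hax|<-] Hxb].
    + apply continuity_pt_filterlim, (ex_derive_continuous g).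
      exists (df x); apply Hdg; lra.
    + exact (continuity_pt_Rmax_clamp f l a Hla Hf).
  - exists c; split; [exact Hc|].
    unfold g in Hmvt; rewrite !Rmax_left in Hmvt by lra; exact Hmvt.
Qed.

Lemma phi1_right_continuous (phi : R -> R) (T0 T : R) :
  filterlim phi (within (fun x => T0 <= x) (locally T)) (locally (phi T)) ->
  filterlim (phi1 phi) (within (fun x => T0 <= x) (locally T)) (locally (phi1 phi T)).
Proof.
  intros Hphi.
  apply (filterlim_comp _ _ _ phi (fun y => y / 2) _ (locally (phi T)) _ Hphi).
  apply (continuous_mult (fun y => y) (fun _ => / 2));
    [apply continuous_id | apply continuous_const].
Qed.

Theorem corollary3 (mu phi : R -> R) (T0 : R)
  (Hmu_cont : forall y, continuous mu y)
  (Hmu_ge : forall y, 0 < y -> 7 * y * ln y <= mu y)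
  (Hphi_cont : forall T, T0 <= T ->
     filterlim phi (within (fun x => T0 <= x) (locally T)) (locally (phi T)))
  (Hladder : forall T, T0 <= T -> PhiJ mu (phi T) = RInt (fun t => (HardyZ t) ^ 2) 0 T)
  (Hphi1_incr : forall t s, T0 <= t -> t < s -> phi1 phi t < phi1 phi s)
  (Hphi1_deriv : forall t, T0 < t -> is_derive (phi1 phi) t (Ztilde2 mu phi t)) :
  forall T U : R, T0 <= T -> 0 < U -> U <= T / ln T ->
  forall a b : R, T0 <= a -> T0 <= b -> phi1 phi a = T -> phi1 phi b = T + U ->
  exists xi : R, a < xi < b /\ Ztilde2 mu phi xi <> 0 /\
    Ztilde2 mu phi xi = ((T + U) - T) / (b - a).
Proof.
  intros T U _ HU _ a b Ha Hb Hpa Hpb.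
  assert (Hab : a < b).
  { destruct (Rlt_or_le a b) as [H | [H | H]]; auto.
    - pose proof (Hphi1_incr b a Hb H); lra.
    - subst; lra. }
  destruct (mean_value_right_continuous (phi1 phi) (Ztilde2 mu phi) T0 a b Ha Hab
              (phi1_right_continuous phi T0 a (Hphi_cont a Ha))
              (fun x Hx => Hphi1_deriv x ltac:(lra)))
    as [xi [Hxi Hmvt]].
  rewrite Hpa, Hpb in Hmvt.
  assert (Hval : Ztilde2 mu phi xi = (T + U - T) / (b - a))
    by (field_simplify_eq; lra).
  exists xi; split; [exact Hxi|]; split; [|exact Hval].
  rewrite Hval; apply Rgt_not_eq, Rdiv_lt_0_compat; lra.
Qed.
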